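(* For $n\ge2$ and all $P,Q\in\Gamma_n$, $D_{\Psi I}(P\|Q)\le \frac{10}9 D_{\Psi h}(P\|Q)$.
   Context: $\Gamma_n=\{P=(p_1,\dots,p_n): p_i>0,\ \sum p_i=1\}$. $h(P\|Q)=\frac12\sum_{i=1}^n(\sqrt{p_i}-\sqrt{q_i})^2$; $\Psi(P\|Q)=\sum_{i=1}^n\frac{(p_i-q_i)^2(p_i+q_i)}{p_iq_i}$; $I(P\|Q)=\frac12\Big[\sum_{i=1}^n p_i\ln\frac{2p_i}{p_i+q_i}+\sum_{i=1}^n q_i\ln\frac{2q_i}{p_i+q_i}\Big]$. $D_{\Psi I}=\frac1{16}\Psi-I$, $D_{\Psi h}=\frac1{16}\Psi-h$. *)

(* concrete reals R. A probability vector of length n is a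
   function p : nat -> R, read on indices 0..n-1. *)
From Stdlib Require Import Reals List.
Open Scope R_scope.

Definition sumn (n : nat) (f : nat -> R) : R :=
  fold_right Rplus 0 (map f (seq 0 n)).

Definition Gamma (n : nat) (p : nat -> R) : Prop :=
  (forall i, (i < n)%nat -> 0 < p i) /\ sumn n p = 1.

Definition hell (n : nat) (p q : nat -> R) : R :=
  / 2 * sumn n (fun i => (sqrt (p i) - sqrt (q i)) ^ 2).

Definition PsiM (n : nat) (p q : nat -> R) : R :=
  sumn n (fun i => (p i - q i) ^ 2 * (p i + q i) / (p i * q i)).

Definition JS (n : nat) (p q : nat -> R) : R :=
  / 2 * (sumn n (fun i => p i * ln (2 * p i / (p i + q i)))
       + sumn n (fun i => q i * ln (2 * q i / (p i + q i)))).

Definition D_PsiI (n : nat) (p q : nat -> R) : R := / 16 * PsiM n p q - JS n p q.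
Definition D_Psih (n : nat) (p q : nat -> R) : R := / 16 * PsiM n p q - hell n p q.

(* [9 (10/9 D_Psih - D_PsiI)] is a sum of termwise gaps [gap (p i) (q i)],
   so it suffices that [gap a b >= 0] for all [a, b > 0].  The gap is positively
   homogeneous of degree one, so [gap a b = b * gap_profile t] with
   [t = sqrt (a / b)].  The profile vanishes at [t = 1] and has derivative
   [2 t gap_slope t], where [gap_slope] is nondecreasing (its derivative has
   the factor [(t - 1)^4]) and vanishes at 1; hence the profile decreases on
   (0, 1] and increases on [1, oo). *)
From Stdlib Require Import Reals Lra Psatz List.
From Coquelicot Require Import Coquelicot.
Open Scope R_scope.

Lemma sumn_add (n : nat) (f g : nat -> R) :
  sumn n (fun i => f i + g i) = sumn n f + sumn n g.
Proof. unfold sumn. induction (seq 0 n); simpl; lra. Qed.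

Lemma sumn_scal (n : nat) (c : R) (f : nat -> R) :
  sumn n (fun i => c * f i) = c * sumn n f.
Proof. unfold sumn. induction (seq 0 n); simpl; lra. Qed.

Lemma sumn_nonneg (n : nat) (f : nat -> R) :
  (forall i, (i < n)%nat -> 0 <= f i) -> 0 <= sumn n f.
Proof.
  intro Hf. unfold sumn.
  assert (Hin : forall i, In i (seq 0 n) -> 0 <= f i).
  { intros i Hi. apply in_seq in Hi. apply Hf. lia. }
  clear Hf. induction (seq 0 n) as [|i s IH]; simpl; [lra|].
  assert (0 <= f i) by (apply Hin; left; reflexivity).
  assert (0 <= fold_right Rplus 0 (map f s)) by (apply IH; intros; apply Hin; right; assumption).
  lra.
Qed.

Section MeanValueOnPositiveReals.

Variables f f' : R -> R.
Hypothesis f_derive : forall x, 0 < x -> is_derive f x (f' x).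

Lemma MVT_same_side (a t : R) :
  0 < a -> 0 < t -> t <> a ->
  exists c, 0 < c /\ 0 < (c - a) * (t - a) /\ f t - f a = f' c * (t - a).
Proof.
  intros Ha Ht Hta.
  assert (Hlim : forall x, 0 < x -> derivable_pt_lim f x (f' x)).
  { intros x Hx. apply is_derive_Reals, f_derive, Hx. }
  destruct (Rlt_or_le a t) as [Hat | Hta'].
  - destruct (MVT_cor2 f f' a t Hat) as [c [Hc Hac]].
    { intros c Hc. apply Hlim. lra. }
    exists c. split; [lra | split; [nra | exact Hc]].
  - destruct (MVT_cor2 f f' t a) as [c [Hc Htc]]; [lra | intros c Hc; apply Hlim; lra |].
    exists c. split; [lra | split; [nra | lra]].
Qed.

Lemma nondecreasing_of_derive_nonneg (a t : R) :
  0 < a -> 0 < t -> (forall x, 0 < x -> 0 <= f' x) ->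
  0 <= (t - a) * (f t - f a).
Proof.
  intros Ha Ht Hf'.
  destruct (Req_dec t a) as [-> | Hta]; [lra |].
  destruct (MVT_same_side a t Ha Ht Hta) as [c [Hc [_ ->]]].
  replace ((t - a) * (f' c * (t - a))) with (f' c * (t - a) ^ 2) by ring.
  apply Rmult_le_pos; [apply Hf', Hc | apply pow2_ge_0].
Qed.

Lemma min_of_derive_sign (a t : R) :
  0 < a -> 0 < t -> (forall x, 0 < x -> 0 <= (x - a) * f' x) ->
  f a <= f t.
Proof.
  intros Ha Ht Hf'.
  destruct (Req_dec t a) as [-> | Hta]; [lra |].
  destruct (MVT_same_side a t Ha Ht Hta) as [c [Hc [Hside Hmvt]]].
  assert (Hc' := Hf' c Hc).
  assert (0 <= f' c * (t - a)).
  { assert (Hca : c - a <> 0) by (intro E; rewrite E, Rmult_0_l in Hside; lra).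
    apply (Rmult_le_reg_l (Rsqr (c - a))); [apply Rsqr_pos_lt, Hca |].
    replace (Rsqr (c - a) * (f' c * (t - a))) with (((c - a) * f' c) * ((c - a) * (t - a))) by (unfold Rsqr; ring).
    rewrite Rmult_0_r. apply Rmult_le_pos; [exact Hc' | lra]. }
  lra.
Qed.

End MeanValueOnPositiveReals.

(* Each summand is a scalar multiple of a summand of [PsiM], [hell] or [JS],
   so that [sumn_gap] is pure linearity. *)
Definition gap (a b : R) : R :=
  / 16 * ((a - b) ^ 2 * (a + b) / (a * b)) + (-5) * (sqrt a - sqrt b) ^ 2
  + 9 / 2 * (a * ln (2 * a / (a + b)) + b * ln (2 * b / (a + b))).

Lemma sumn_gap (n : nat) (p q : nat -> R) :
  sumn n (fun i => gap (p i) (q i)) = 9 * (10 / 9 * D_Psih n p q - D_PsiI n p q).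
Proof.
  unfold gap, D_Psih, D_PsiI, PsiM, hell, JS.
  rewrite !sumn_add, !sumn_scal, sumn_add. lra.
Qed.

Lemma gap_homogeneous (l a b : R) :
  0 < l -> 0 < a -> 0 < b -> gap (l * a) (l * b) = l * gap a b.
Proof.
  intros Hl Ha Hb. unfold gap.
  rewrite !sqrt_mult by lra.
  replace (2 * (l * a) / (l * a + l * b)) with (2 * a / (a + b)) by (field; repeat split; nra).
  replace (2 * (l * b) / (l * a + l * b)) with (2 * b / (a + b)) by (field; repeat split; nra).
  replace ((sqrt l * sqrt a - sqrt l * sqrt b) ^ 2)
    with (sqrt l ^ 2 * (sqrt a - sqrt b) ^ 2) by ring.
  rewrite pow2_sqrt by lra.
  field. lra.
Qed.

Definition gap_profile (t : R) : R :=
  (t ^ 2 - 1) ^ 2 * (t ^ 2 + 1) / (16 * t ^ 2) - 5 * (t - 1) ^ 2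
  + 9 / 2 * (t ^ 2 * ln (2 * t ^ 2 / (t ^ 2 + 1)) + ln (2 / (t ^ 2 + 1))).

Definition gap_slope (t : R) : R :=
  (2 * t ^ 2 - 1 - / t ^ 4) / 16 - 5 + 5 / t + 9 / 2 * ln (2 * t ^ 2 / (t ^ 2 + 1)).

Definition gap_slope_derive (t : R) : R :=
  (t - 1) ^ 4 * ((t ^ 2 + 1) ^ 2 + 4 * t * (t ^ 2 + 1) + 9 * t ^ 2) / (4 * t ^ 5 * (t ^ 2 + 1)).

Lemma gap_eq_profile (t : R) : 0 < t -> gap (t ^ 2) 1 = gap_profile t.
Proof.
  intro Ht. unfold gap, gap_profile.
  rewrite sqrt_1, sqrt_pow2 by lra.
  replace (2 * 1 / (t ^ 2 + 1)) with (2 / (t ^ 2 + 1)) by (field; nra).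
  field. lra.
Qed.

Lemma is_derive_gap_profile (t : R) :
  0 < t -> is_derive gap_profile t (2 * t * gap_slope t).
Proof.
  intro Ht. unfold gap_profile, gap_slope. auto_derive.
  - assert (0 < t * t) by nra.
    repeat split; try nra;
      apply Rmult_lt_0_compat; nra || (apply Rinv_0_lt_compat; nra).
  - replace (2 * (t * (t * 1)) * / (t * (t * 1) + 1)) with (2 * t ^ 2 / (t ^ 2 + 1))
      by (simpl; field; nra).
    set (L := ln _). field. nra.
Qed.

Lemma is_derive_gap_slope (t : R) :
  0 < t -> is_derive gap_slope t (gap_slope_derive t).
Proof.
  intro Ht. unfold gap_slope, gap_slope_derive. auto_derive.
  - assert (0 < t * t) by nra.
    assert (0 < t * (t * (t * (t * 1)))) by (simpl; nra).
    repeat split; try nra.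
    apply Rmult_lt_0_compat; [nra | apply Rinv_0_lt_compat; nra].
  - field. nra.
Qed.

Lemma gap_slope_derive_nonneg (t : R) : 0 < t -> 0 <= gap_slope_derive t.
Proof.
  intro Ht. unfold gap_slope_derive.
  assert (0 < t ^ 5) by (apply pow_lt; lra).
  apply Rmult_le_pos.
  - apply Rmult_le_pos; [| nra].
    replace ((t - 1) ^ 4) with (((t - 1) ^ 2) ^ 2) by ring. apply pow2_ge_0.
  - apply Rlt_le, Rinv_0_lt_compat. nra.
Qed.

Lemma gap_slope_1 : gap_slope 1 = 0.
Proof.
  unfold gap_slope. replace (2 * 1 ^ 2 / (1 ^ 2 + 1)) with 1 by field.
  rewrite ln_1. field.
Qed.

Lemma gap_profile_1 : gap_profile 1 = 0.
Proof.
  unfold gap_profile.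
  replace (2 * 1 ^ 2 / (1 ^ 2 + 1)) with 1 by field.
  replace (2 / (1 ^ 2 + 1)) with 1 by field.
  rewrite ln_1. field.
Qed.

Lemma gap_slope_sign (t : R) : 0 < t -> 0 <= (t - 1) * gap_slope t.
Proof.
  intro Ht.
  assert (H := nondecreasing_of_derive_nonneg _ _ is_derive_gap_slope 1 t
                 Rlt_0_1 Ht gap_slope_derive_nonneg).
  rewrite gap_slope_1, Rminus_0_r in H. exact H.
Qed.

Lemma gap_profile_nonneg (t : R) : 0 < t -> 0 <= gap_profile t.
Proof.
  intro Ht. rewrite <- gap_profile_1.
  apply (min_of_derive_sign _ _ is_derive_gap_profile); [lra | exact Ht |].
  intros x Hx. assert (Hs := gap_slope_sign x Hx). nra.
Qed.

Lemma gap_nonneg (a b : R) : 0 < a -> 0 < b -> 0 <= gap a b.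
Proof.
  intros Ha Hb.
  set (t := sqrt (a / b)).
  assert (Hab : 0 < a / b) by (apply Rdiv_lt_0_compat; assumption).
  assert (Ht : 0 < t) by (apply sqrt_lt_R0, Hab).
  assert (Ea : a = b * t ^ 2) by (unfold t; rewrite pow2_sqrt by lra; field; lra).
  clearbody t. subst a.
  replace (gap (b * t ^ 2) b) with (gap (b * t ^ 2) (b * 1)) by (rewrite Rmult_1_r; reflexivity).
  rewrite gap_homogeneous, gap_eq_profile by (try apply pow_lt; lra).
  apply Rmult_le_pos; [lra | apply gap_profile_nonneg, Ht].
Qed.

Theorem proposition5p11 (n : nat) (p q : nat -> R) :
  (2 <= n)%nat -> Gamma n p -> Gamma n q ->
  D_PsiI n p q <= 10 / 9 * D_Psih n p q.
Proof.
  intros _ [Hp _] [Hq _].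
  assert (H : 0 <= sumn n (fun i => gap (p i) (q i))).
  { apply sumn_nonneg. intros i Hi. apply gap_nonneg; [apply Hp | apply Hq]; exact Hi. }
  rewrite sumn_gap in H. lra.
Qed.
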